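(* Let $k$ be a field of characteristic $0$, let $\Lambda_{\mathbf q}$, $G$, $\chi_{g,l}$, $\mathbb K$, $K_{g,\gamma}$ and $C_g$ be as in the context, and let $g\in G$ and $\gamma\in(\mathbb N\cup\{-1\})^n$ with $\gamma\notin C_g$. Then the complex $K_{g,\gamma}$ is acyclic, i.e. its cohomology vanishes in every degree.
   Context: Fix $n\ge 1$ and scalars $q_{i,j}\in k^*$ ($1\le i,j\le n$) with $q_{j,i}=q_{i,j}^{-1}$ and $q_{i,i}=-1$. Let $\Lambda_{\mathbf q}=k\langle x_1,\dots,x_n\mid x_ix_j=-q_{i,j}x_jx_i,\ x_i^2=0\ (1\le i,j\le n)\rangle$. For $\alpha\in\{0,1\}^n$ write $x^\alpha=x_1^{\alpha_1}\cdots x_n^{\alpha_n}$. Let $G$ be a finite group acting on $\Lambda_{\mathbf q}$ by algebra automorphisms diagonally: ${}^gx_i=\chi_{g,i}x_i$ with $\chi_{g,i}\in k$. The skew group algebra $\Lambda_{\mathbf q}\rtimes G$ is $\Lambda_{\mathbf q}\otimes kG$ with $(\lambda\otimes g)(\mu\otimes h)=\lambda({}^g\mu)\otimes gh$; it is a $\Lambda_{\mathbf q}$-bimodule via $\lambda\mapsto\lambda\otimes1$, and for each $g\in G$, $\Lambda_{\mathbf q}\otimes g$ is a sub-bimodule. For $\beta\in\mathbb N^n$ let $|\beta|=\beta_1+\dots+\beta_n$ and let $[j]\in\mathbb N^n$ be the $j$-th unit vector. Let $\mathbb K$ be the complex of $\Lambda_{\mathbf q}^e$-modules ($\Lambda^e=\Lambda\otimes\Lambda^{op}$)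 with $\mathbb K_m=\bigoplus_{\beta\in\mathbb N^n,|\beta|=m}\Lambda_{\mathbf q}\epsilon_\beta\Lambda_{\mathbf q}$, free on generators $\epsilon_\beta$, with differential $\delta_m(\epsilon_\beta)=\sum_{j=1}^n\big(\prod_{l<j}q_{l,j}^{\beta_l}\,x_j\epsilon_{\beta-[j]}+(-1)^{\sum_{l\le j}\beta_l}\prod_{l>j}(-q_{j,l})^{\beta_l}\,\epsilon_{\beta-[j]}x_j\big)$ (where $\epsilon_{\beta-[j]}:=0$ if $\beta_j=0$), augmented by $\epsilon_0\mapsto 1\in\Lambda_{\mathbf q}$; it is a projective $\Lambda_{\mathbf q}^e$-resolution of $\Lambda_{\mathbf q}$. For $\alpha\in\{0,1\}^n$, $\beta\in\mathbb N^n$, $g\in G$, let $(x^\alpha\otimes g)\epsilon_\beta^*\in\operatorname{Hom}_{\Lambda_{\mathbf q}^e}(\mathbb K_{|\beta|},\Lambda_{\mathbf q}\otimes g)$ be the map sending $\epsilon_\beta\mapsto x^\alpha\otimes g$ and $\epsilon_{\beta'}\mapsto 0$ for $\beta'\ne\beta$. The cochain complex $\operatorname{Hom}_{\Lambda_{\mathbf q}^e}(\mathbb K,\Lambda_{\mathbf q}\otimes g)$ has the differential induced by $\delta$ (precomposition). For $\gamma\in(\mathbb N\cup\{-1\})^n$ let $K^m_{g,\gamma}=\operatorname{span}_k\{(x^\alpha\otimes g)\epsilon_\beta^*\mid \alpha\in\{0,1\}^n,\beta\in\mathbb N^n,|\beta|=m,\beta-\alpha=\gamma\}$; then $K_{g,\gamma}=\bigoplus_m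 K^m_{g,\gamma}$ is a subcomplex of $\operatorname{Hom}_{\Lambda_{\mathbf q}^e}(\mathbb K,\Lambda_{\mathbf q}\otimes g)$. Define $C_g=\{\gamma\in(\mathbb N\cup\{-1\})^n\mid \text{for all } l,\ \gamma_l=-1 \text{ or } (-1)^{\gamma_l}\prod_{k\ne l}(-q_{k,l})^{\gamma_k}=\chi_{g,l}\}$. *)

From HB Require Import structures.
From mathcomp Require Import all_boot all_order fingroup all_algebra.
Set Implicit Arguments. Unset Strict Implicit. Unset Printing Implicit Defensive.
Import Order.TTheory GRing.Theory Num.Theory.
Local Open Scope ring_scope.

Section QuantumExterior.
Variables (k : fieldType) (n : nat).

Local Notation expo := {ffun 'I_n -> bool}.

(* Elements of Lambda_q, written in the k-basis {x^alpha | alpha in {0,1}^n}: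
   u = sum_alpha (u alpha) x^alpha. *)
Local Notation Lam := {ffun expo -> k}.

Definition mono (a : expo) : Lam := [ffun b => (b == a)%:R].

Definition lone : Lam := mono [ffun=> false].

Definition xgen (i : 'I_n) : Lam := mono [ffun l => l == i].

(* Multiplication on basis monomials, derived from the relations
   x_i x_j = - q_{ij} x_j x_i and x_i^2 = 0:
   x^a x^b = 0 if a, b overlap, and otherwise
   x^a x^b = (prod_{i > j, a_i = 1, b_j = 1} (- q_{i,j})) x^{a+b}. *)
Definition mcoef (q : 'I_n -> 'I_n -> k) (a b : expo) : k :=
  \prod_(i : 'I_n) \prod_(j : 'I_n | (j < i)%N && a i && b j) (- q i j).

Definition disj (a b : expo) : bool := [forall l, ~~ (a l && b l)].

Definition lmul (q : 'I_n -> 'I_n -> k) (u v : Lam) : Lam :=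
  [ffun c => \sum_(a : expo) \sum_(b : expo)
     (if disj a b && (c == [ffun l => a l || b l])
      then mcoef q a b * u a * v b else 0)].

Definition lscale (c : k) (u : Lam) : Lam := [ffun a => c * u a].

(* The diagonal action of g: ^g x_i = chi g i x_i, extended to the algebra
   automorphism ^g x^a = (prod_{a_l = 1} chi g l) x^a. *)
Definition gact (gT : finGroupType) (chi : gT -> 'I_n -> k) (g : gT) (u : Lam) : Lam :=
  [ffun a : expo => (\prod_(l : 'I_n | a l) chi g l) * u a].

(* Bimodule structure on Lambda_q (x) g  (identified with Lambda_q via
   mu (x) g <-> mu):  lambda . (mu (x) g) . nu = lambda mu (^g nu) (x) g. *)
Definition bimod_act (q : 'I_n -> 'I_n -> k) (gT : finGroupType)
    (chi : gT -> 'I_n -> k) (g : gT) (lam mu nu : Lam) : Lam :=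
  lmul q (lmul q lam mu) (gact chi g nu).

Definition degN (beta : 'I_n -> nat) : nat := (\sum_(l : 'I_n) beta l)%N.
Definition subunit (beta : 'I_n -> nat) (j : 'I_n) : 'I_n -> nat :=
  fun l => if l == j then (beta l).-1 else beta l.

(* A cochain of degree m in Hom_{Lambda^e}(K_m, Lambda_q (x) g): since K_m is
   free on the eps_beta (|beta| = m), such a map is the same as the family of
   images f beta = image of eps_beta (only the values at |beta| = m matter). *)
Definition cochain := ('I_n -> nat) -> Lam.

Definition c_left (q : 'I_n -> 'I_n -> k) (beta : 'I_n -> nat) (j : 'I_n) : k :=
  \prod_(l : 'I_n | (l < j)%N) q l j ^+ beta l.
Definition c_right (q : 'I_n -> 'I_n -> k) (beta : 'I_n -> nat) (j : 'I_n) : k :=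
  (-1) ^+ (\sum_(l : 'I_n | (l <= j)%N) beta l)%N *
  \prod_(l : 'I_n | (j < l)%N) (- q j l) ^+ beta l.

(* The cochain differential (precomposition with delta):
   (d f)(eps_beta) = f(delta(eps_beta))
     = sum_j [beta_j > 0] ( c_left  x_j . f(eps_{beta-[j]})
                          + c_right f(eps_{beta-[j]}) . x_j ). *)
Definition dcoch (q : 'I_n -> 'I_n -> k) (gT : finGroupType)
    (chi : gT -> 'I_n -> k) (g : gT) (f : cochain) : cochain :=
  fun beta => \sum_(j : 'I_n)
    (if (0 < beta j)%N then
       lscale (c_left q beta j) (bimod_act q chi g (xgen j) (f (subunit beta j)) lone)
     + lscale (c_right q beta j) (bimod_act q chi g lone (f (subunit beta j)) (xgen j))
     else 0).

(* f lies in K^m_{g,gamma} = span{(x^alpha (x) g) eps_beta^* | |beta| = m,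
   beta - alpha = gamma}: for each beta with |beta| = m, the image of eps_beta
   is a combination of those x^alpha with beta - alpha = gamma. *)
Definition inK (gamma : 'I_n -> int) (m : nat) (f : cochain) : Prop :=
  forall beta : 'I_n -> nat, degN beta = m ->
    forall a : expo, f beta a != 0 ->
      forall l, (beta l)%:Z - (a l)%:Z = gamma l.

Definition cohom_vanishes (q : 'I_n -> 'I_n -> k) (gT : finGroupType)
    (chi : gT -> 'I_n -> k) (g : gT) (gamma : 'I_n -> int) (m : nat) : Prop :=
  forall f : cochain, inK gamma m f ->
    (forall beta, degN beta = m.+1 -> dcoch q chi g f beta = 0) ->
    match m with
    | 0%N => forall beta, degN beta = 0%N -> f beta = 0
    | m'.+1 => exists h : cochain, inK gamma m' h /\
                 forall beta, degN beta = m -> dcoch q chi g h beta = f beta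
    end.

Definition in_Cg (q : 'I_n -> 'I_n -> k) (gT : finGroupType)
    (chi : gT -> 'I_n -> k) (g : gT) (gamma : 'I_n -> int) : Prop :=
  forall l : 'I_n, gamma l = -1 \/
    (-1) ^ (gamma l) * \prod_(kk : 'I_n | kk != l) (- q kk l) ^ (gamma kk) = chi g l.

End QuantumExterior.

From HB Require Import structures.
From mathcomp Require Import all_boot all_order fingroup all_algebra.
From mathcomp Require Import ring.
From Stdlib Require Import FunctionalExtensionality.
Import Order.TTheory GRing.Theory Num.Theory.
Set Implicit Arguments. Unset Strict Implicit. Unset Printing Implicit Defensive.
Local Open Scope ring_scope.

(* Fix l with gamma_l <> -1 at which the defining equation of C_g fails. In the
   monomial basis the differential reads
     (d f)(beta)(c) = sum_(j | beta_j > 0, c_j = 1) dcoef beta c j * f (beta - [j]) (c - [j]).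
   On the diagonal beta - c = gamma the entry dcoef beta c l depends only on gamma,
   up to a sign, and it vanishes exactly when the C_g equation holds at l. Removing
   the index l from (beta, c) multiplies dcoef _ _ j by a sign that is
   antisymmetric in (l, j). Hence "add the index l, then divide by dcoef _ _ l" is
   a contracting homotopy on the cocycles of K_{g,gamma}. *)

Section Exponents.
Variable n : nat.
Local Notation expo := {ffun 'I_n -> bool}.
Implicit Types (c a : expo) (beta : 'I_n -> nat) (j l : 'I_n).

Definition expo0 : expo := [ffun=> false].
Definition expo1 (j : 'I_n) : expo := [ffun l => l == j].
Definition expoU1 (c : expo) (j : 'I_n) : expo := [ffun l => c l || (l == j)].
Definition expoD1 (c : expo) (j : 'I_n) : expo := [ffun l => c l && (l != j)].

Definition incr (beta : 'I_n -> nat) (j : 'I_n) : 'I_n -> nat :=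
  fun l => if l == j then (beta l).+1 else beta l.

Lemma expoU1_id c j : expoU1 c j j.
Proof. by rewrite ffunE eqxx orbT. Qed.

Lemma expoU1_neq c j l : l != j -> expoU1 c j l = c l.
Proof. by rewrite ffunE => /negbTE ->; rewrite orbF. Qed.

Lemma expoD1_id c j : expoD1 c j j = false.
Proof. by rewrite ffunE eqxx andbF. Qed.

Lemma expoD1_neq c j l : l != j -> expoD1 c j l = c l.
Proof. by rewrite ffunE => ->; rewrite andbT. Qed.

Lemma expoU1K c j : c j = false -> expoD1 (expoU1 c j) j = c.
Proof.
move=> cj; apply/ffunP => l; rewrite !ffunE.
by case: (eqVneq l j) => [->|_]; rewrite ?cj ?orbF ?andbT ?andbF.
Qed.

Lemma expoD1K c j : c j -> expoU1 (expoD1 c j) j = c.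
Proof.
move=> cj; apply/ffunP => l; rewrite !ffunE.
by case: (eqVneq l j) => [->|_]; rewrite ?cj ?orbF ?andbT ?orbT.
Qed.

Lemma expoD1U1C c j l : j != l -> expoD1 (expoU1 c l) j = expoU1 (expoD1 c j) l.
Proof.
move=> jl; apply/ffunP => i; rewrite !ffunE.
by case: (eqVneq i l) => [->|_]; rewrite ?orbT ?orbF ?andbT // andTb eq_sym.
Qed.

Lemma incr_id beta j : incr beta j j = (beta j).+1.
Proof. by rewrite /incr eqxx. Qed.

Lemma incr_neq beta j l : l != j -> incr beta j l = beta l.
Proof. by rewrite /incr => /negbTE ->. Qed.

Lemma subunit_id beta j : subunit beta j j = (beta j).-1.
Proof. by rewrite /subunit eqxx. Qed.

Lemma subunit_neq beta j l : l != j -> subunit beta j l = beta l.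
Proof. by rewrite /subunit => /negbTE ->. Qed.

Lemma incrK beta j : subunit (incr beta j) j = beta.
Proof.
by apply: functional_extensionality => l; rewrite /incr /subunit; case: eqP.
Qed.

Lemma subunitK beta j : (0 < beta j)%N -> incr (subunit beta j) j = beta.
Proof.
move=> bj; apply: functional_extensionality => l; rewrite /incr /subunit.
by case: (eqVneq l j) => [->|//]; rewrite prednK.
Qed.

Lemma subunit_incrC beta j l : j != l ->
  subunit (incr beta l) j = incr (subunit beta j) l.
Proof.
move=> jl; apply: functional_extensionality => i; rewrite /incr /subunit.
by case: (eqVneq i l) => [->|//]; rewrite eq_sym (negbTE jl).
Qed.

Lemma degN_incr beta j : degN (incr beta j) = (degN beta).+1.
Proof.
rewrite /degN (bigD1 j) //= [in RHS](bigD1 j) //= incr_id addSn.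
by congr (_ + _)%N.+1; apply: eq_bigr => l /incr_neq.
Qed.

Lemma degN_subunit beta j : (0 < beta j)%N -> degN beta = (degN (subunit beta j)).+1.
Proof. by move=> bj; rewrite -(degN_incr _ j) subunitK. Qed.

Lemma diff_incr beta a j l : a j = false ->
  (incr beta j l)%:Z - (expoU1 a j l : nat)%:Z = (beta l)%:Z - (a l : nat)%:Z.
Proof.
move=> aj; case: (eqVneq l j) => [->|lj]; last by rewrite incr_neq ?expoU1_neq.
by rewrite incr_id expoU1_id aj -addn1 PoszD addrK subr0.
Qed.

Lemma diff_subunit beta c j l : (0 < beta j)%N -> c j ->
  (subunit beta j l)%:Z - (expoD1 c j l : nat)%:Z = (beta l)%:Z - (c l : nat)%:Z.
Proof.
move=> bj cj; rewrite -[in RHS](subunitK bj) -[in RHS](expoD1K cj).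
by rewrite diff_incr ?expoD1_id.
Qed.

End Exponents.

Arguments expo0 {n}.

Section Product.
Variables (k : fieldType) (n : nat) (q : 'I_n -> 'I_n -> k).
Local Notation expo := {ffun 'I_n -> bool}.
Local Notation Lam := {ffun expo -> k}.
Implicit Types (u v : Lam) (a b c : expo) (j : 'I_n).

Lemma lmul_supp_r u v b0 : (forall b, b != b0 -> v b = 0) -> forall c,
  lmul q u v c = \sum_a (if disj a b0 && (c == [ffun l => a l || b0 l])
                         then mcoef q a b0 * u a * v b0 else 0).
Proof.
move=> v0 c; rewrite ffunE; apply: eq_bigr => a _.
by rewrite (big_only1 b0) // => b /v0 ->; case: ifP; rewrite ?mulr0.
Qed.

Lemma lmul_supp_l u v a0 : (forall a, a != a0 -> u a = 0) -> forall c,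
  lmul q u v c = \sum_b (if disj a0 b && (c == [ffun l => a0 l || b l])
                         then mcoef q a0 b * u a0 * v b else 0).
Proof.
move=> u0 c; rewrite ffunE (big_only1 a0) // => a /u0 ua0 _.
by apply: big1 => b _; rewrite ua0; case: ifP; rewrite ?mulr0 ?mul0r.
Qed.

Lemma disj_expo1r c a j :
  disj a (expo1 j) && (c == [ffun l => a l || expo1 j l]) = c j && (a == expoD1 c j).
Proof.
apply/idP/idP => [/andP [/forallP a_j /eqP ->]|/andP [cj /eqP ->]].
  have aj : a j = false by move: (a_j j); rewrite ffunE eqxx andbT => /negbTE.
  rewrite ffunE ffunE eqxx orbT; apply/eqP/ffunP => l; rewrite !ffunE.
  by case: (eqVneq l j) => [->|_]; rewrite ?aj ?orbF ?andbT.
apply/andP; split.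
  by apply/forallP => l; rewrite !ffunE; case: eqVneq; rewrite ?andbF ?andbT.
apply/eqP/ffunP => l; rewrite !ffunE.
by case: (eqVneq l j) => [->|]; rewrite ?cj ?orbT ?orbF ?andbT.
Qed.

Lemma disj_expo1l c b j :
  disj (expo1 j) b && (c == [ffun l => expo1 j l || b l]) = c j && (b == expoD1 c j).
Proof.
rewrite -(disj_expo1r c b j); congr andb.
  by apply/forallP/forallP => H l; move: (H l); rewrite andbC.
by congr (c == _); apply/ffunP => l; rewrite !ffunE orbC.
Qed.

Lemma disj_expo0r c a : disj a expo0 && (c == [ffun l => a l || expo0 l]) = (a == c).
Proof.
have -> : [ffun l => a l || expo0 l] = a by apply/ffunP => l; rewrite !ffunE orbF.
by rewrite eq_sym andb_idl // => _; apply/forallP => l; rewrite ffunE andbF.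
Qed.

Lemma disj_expo0l c b : disj expo0 b && (c == [ffun l => expo0 l || b l]) = (b == c).
Proof.
have -> : [ffun l => expo0 l || b l] = b by apply/ffunP => l; rewrite !ffunE.
by rewrite eq_sym andb_idl // => _; apply/forallP => l; rewrite ffunE.
Qed.

Lemma mcoef0r a : mcoef q a expo0 = 1.
Proof. by apply: big1 => i _; apply: big1 => j /andP [_]; rewrite ffunE. Qed.

Lemma mcoef0l b : mcoef q expo0 b = 1.
Proof. by apply: big1 => i _; apply: big1 => j /andP [/andP [_]]; rewrite ffunE. Qed.

Lemma sum_if_eq (F : expo -> k) (P : bool) c :
  \sum_a (if P && (a == c) then F a else 0) = if P then F c else 0.
Proof. by case: P; [rewrite -big_mkcond big_pred1_eq | rewrite big1]. Qed.

Lemma lone_supp a : a != expo0 -> lone k n a = 0.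
Proof. by rewrite ffunE => /negbTE ->. Qed.

Lemma lone0 : lone k n expo0 = 1.
Proof. by rewrite ffunE eqxx. Qed.

Lemma xgen_supp j b : b != expo1 j -> xgen k j b = 0.
Proof. by rewrite ffunE => /negbTE ->. Qed.

Lemma xgen1 j : xgen k j (expo1 j) = 1.
Proof. by rewrite ffunE eqxx. Qed.

Lemma lmulr1 u : lmul q u (lone k n) = u.
Proof.
apply/ffunP => c; rewrite (lmul_supp_r _ lone_supp).
under eq_bigr do rewrite disj_expo0r.
by rewrite (sum_if_eq _ true) mcoef0r lone0 mul1r mulr1.
Qed.

Lemma lmul1r u : lmul q (lone k n) u = u.
Proof.
apply/ffunP => c; rewrite (lmul_supp_l _ lone_supp).
under eq_bigr do rewrite disj_expo0l.
by rewrite (sum_if_eq _ true) mcoef0l lone0 !mul1r.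
Qed.

Lemma lmul_xgenl u j c : lmul q (xgen k j) u c =
  if c j then mcoef q (expo1 j) (expoD1 c j) * u (expoD1 c j) else 0.
Proof.
rewrite (lmul_supp_l _ (@xgen_supp j)).
by under eq_bigr do rewrite disj_expo1l; rewrite sum_if_eq xgen1 mulr1.
Qed.

Lemma lmul_xgenr u x j c : lmul q u (lscale x (xgen k j)) c =
  if c j then x * mcoef q (expoD1 c j) (expo1 j) * u (expoD1 c j) else 0.
Proof.
have supp b : b != expo1 j -> lscale x (xgen k j) b = 0.
  by move=> /xgen_supp xb; rewrite ffunE xb mulr0.
rewrite (lmul_supp_r _ supp).
under eq_bigr do rewrite disj_expo1r.
by rewrite sum_if_eq ffunE xgen1 mulr1; case: (c j) => //; ring.
Qed.

End Product.

Section Differential.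
Variables (k : fieldType) (n : nat) (q : 'I_n -> 'I_n -> k).
Variables (gT : finGroupType) (chi : gT -> 'I_n -> k) (g : gT).
Local Notation expo := {ffun 'I_n -> bool}.
Implicit Types (a c : expo) (beta : 'I_n -> nat) (i j l : 'I_n) (f : cochain k n).

Lemma lscaleE x (u : {ffun expo -> k}) c : lscale x u c = x * u c.
Proof. by rewrite ffunE. Qed.

Lemma gact_lone : gact chi g (lone k n) = lone k n.
Proof.
apply/ffunP => a; rewrite !ffunE.
have [->|_] := eqVneq a expo0; last by rewrite mulr0.
by rewrite big_pred0 ?mul1r // => l; rewrite ffunE.
Qed.

Lemma gact_xgen j : gact chi g (xgen k j) = lscale (chi g j) (xgen k j).
Proof.
apply/ffunP => a; rewrite !ffunE.
have [->|_] := eqVneq a (expo1 j); last by rewrite !mulr0.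
by rewrite (big_pred1 j) // => l; rewrite ffunE.
Qed.

(* The matrix entry of the differential in the monomial basis, see [dcochE]. *)
Definition dcoef beta c j : k :=
  c_left q beta j * mcoef q (expo1 j) (expoD1 c j)
  + c_right q beta j * chi g j * mcoef q (expoD1 c j) (expo1 j).

Lemma dcoch_deg0 f beta : degN beta = 0%N -> dcoch q chi g f beta = 0.
Proof.
move=> d0; apply: big1 => j _; suff -> : beta j = 0%N by [].
by move: d0; rewrite /degN (bigD1 j) //= => /eqP; rewrite addn_eq0 => /andP [/eqP].
Qed.

Lemma dcochE f beta c :
  dcoch q chi g f beta c = \sum_j (if (0 < beta j)%N && c j
     then dcoef beta c j * f (subunit beta j) (expoD1 c j) else 0).
Proof.
rewrite /dcoch sum_ffunE; apply: eq_bigr => j _.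
case: ifP => bj /=; last by rewrite ffunE.
rewrite /bimod_act gact_lone lmulr1 lmul1r gact_xgen ffunE !lscaleE.
rewrite lmul_xgenl lmul_xgenr /dcoef.
by case: (c j); rewrite ?mulr0 ?addr0 //; ring.
Qed.

Lemma mcoef_expo1l c j : mcoef q (expo1 j) c = \prod_(i : 'I_n | (i < j)%N && c i) (- q j i).
Proof.
rewrite /mcoef (bigD1 j) //= [X in _ * X]big1 ?mulr1.
  by apply: eq_bigl => i; rewrite ffunE eqxx andbT.
by move=> i /negbTE ij; apply: big1 => l /andP [/andP [_]]; rewrite ffunE ij.
Qed.

Lemma mcoef_expo1r c j : mcoef q c (expo1 j) = \prod_(i : 'I_n | (j < i)%N && c i) (- q i j).
Proof.
rewrite /mcoef [RHS]big_mkcond; apply: eq_bigr => i _.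
case ci: ((j < i)%N && c i).
  by rewrite (big_pred1 j) // => l; rewrite ffunE /=; case: eqP => [->|]; rewrite ?ci ?andbF.
by rewrite big_pred0 // => l; rewrite ffunE; case: eqP => [->|]; rewrite ?ci ?andbF.
Qed.

Definition lfactor beta c j i : k :=
  if (i < j)%N then q i j ^+ beta i * (if c i then - q j i else 1) else 1.

Definition rfactor beta c j i : k :=
  if (j < i)%N then (- q j i) ^+ beta i * (if c i then - q i j else 1) else 1.

Lemma dcoefE beta c j : dcoef beta c j = \prod_(i : 'I_n) lfactor beta c j i
  + (-1) ^+ (\sum_(i : 'I_n | (i <= j)%N) beta i) * chi g j
    * \prod_(i : 'I_n) rfactor beta c j i.
Proof.
have left : c_left q beta j * mcoef q (expo1 j) (expoD1 c j)
    = \prod_(i : 'I_n) lfactor beta c j i.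
  rewrite /c_left mcoef_expo1l big_mkcond [X in _ * X]big_mkcond -big_split.
  apply: eq_bigr => i _; rewrite /lfactor ffunE.
  case: ifP => [ij|_]; rewrite /= ?mulr1 //.
  by rewrite -val_eqE (ltn_eqF ij) andbT; case: (c i); rewrite ?mulr1.
have right : \prod_(i : 'I_n) rfactor beta c j i
    = (\prod_(i : 'I_n | (j < i)%N) (- q j i) ^+ beta i)
    * mcoef q (expoD1 c j) (expo1 j).
  rewrite mcoef_expo1r [X in _ = X * _]big_mkcond [X in _ = _ * X]big_mkcond -big_split.
  apply: eq_bigr => i _; rewrite /rfactor ffunE.
  case: ifP => [ji|_]; rewrite /= ?mulr1 //.
  by rewrite eq_sym -val_eqE (ltn_eqF ji) andbT; case: (c i); rewrite ?mulr1.
rewrite /dcoef left right /c_right; ring.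
Qed.

Hypothesis q_neq0 : forall i j, q i j != 0.
Hypothesis qV : forall i j, q j i = (q i j)^-1.

Lemma q_mul_sym i j : q i j * q j i = 1.
Proof. by rewrite (qV i j) mulfV. Qed.

Definition osign (l j : 'I_n) : k := if (l < j)%N then -1 else 1.

Lemma osignC l j : l != j -> osign l j = - osign j l.
Proof.
rewrite /osign -val_eqE; case: ltngtP => //= _ _.
by rewrite opprK.
Qed.

Lemma osign_neq0 l j : osign l j != 0.
Proof. by rewrite /osign; case: ifP; rewrite ?oppr_eq0 oner_eq0. Qed.

Section RemoveIndex.
Variables (beta : 'I_n -> nat) (c : expo) (l j : 'I_n).
Hypotheses (lj : l != j) (bl : (0 < beta l)%N) (cl : c l).

Lemma prod_lfactor_subunit : \prod_(i : 'I_n) lfactor (subunit beta l) (expoD1 c l) j i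
  = osign l j * \prod_(i : 'I_n) lfactor beta c j i.
Proof.
rewrite (bigD1 l) //= [in RHS](bigD1 l) //= mulrA.
congr (_ * _); last by apply: eq_bigr => i il; rewrite /lfactor subunit_neq ?expoD1_neq.
rewrite /lfactor /osign subunit_id expoD1_id cl; case: ifP => _; rewrite ?mulr1 //.
case: (beta l) bl => // b _ /=; rewrite exprS.
by rewrite -[LHS]mulr1 -[X in _ * X](q_mul_sym l j); ring.
Qed.

Lemma prod_rfactor_subunit : \prod_(i : 'I_n) rfactor (subunit beta l) (expoD1 c l) j i
  = \prod_(i : 'I_n) rfactor beta c j i.
Proof.
rewrite (bigD1 l) //= [in RHS](bigD1 l) //=.
congr (_ * _); last by apply: eq_bigr => i il; rewrite /rfactor subunit_neq ?expoD1_neq.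
rewrite /rfactor subunit_id expoD1_id cl; case: ifP => // _.
case: (beta l) bl => // b _ /=; rewrite exprS.
by rewrite -[LHS]mulr1 -[X in _ * X](q_mul_sym j l); ring.
Qed.

Lemma sign_subunit : (-1) ^+ (\sum_(i : 'I_n | (i <= j)%N) subunit beta l i)
  = osign l j * (-1) ^+ (\sum_(i : 'I_n | (i <= j)%N) beta i) :> k.
Proof.
rewrite /osign; case: ifP => [lj'|jl].
  rewrite (bigD1 l) ?(ltnW lj') // [in RHS](bigD1 l) ?(ltnW lj') //=.
  rewrite (eq_bigr beta) => [|i /andP [_]]; last exact: subunit_neq.
  by rewrite subunit_id -(prednK bl) addSn exprS mulrA mulrNN !mul1r.
rewrite mul1r; congr (_ ^+ _); apply: eq_bigr => i ij; rewrite subunit_neq //.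
by apply: contraTneq ij => ->; rewrite leq_eqVlt jl orbF val_eqE.
Qed.

Lemma dcoef_subunit : dcoef (subunit beta l) (expoD1 c l) j = osign l j * dcoef beta c j.
Proof.
rewrite !dcoefE prod_lfactor_subunit prod_rfactor_subunit sign_subunit; ring.
Qed.

End RemoveIndex.

Lemma exprz_subn1 (x : k) (b : nat) : x != 0 -> x ^ (b%:Z - 1) = x ^+ b / x.
Proof.
move=> x0; apply: (mulIf x0); rewrite divfK // -[X in _ * X]expr1z -expfzDr //.
by rewrite subrK exprnP.
Qed.

Lemma lfactor_exprz i j (b : nat) (ci : bool) :
  q i j ^+ b * (if ci then - q j i else 1) = (-1) ^+ b * (- q i j) ^ (b%:Z - ci%:Z).
Proof.
have qij0 : - q i j != 0 by rewrite oppr_eq0.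
case: ci; rewrite /= ?subr0 -?exprnP ?exprz_subn1 // (exprNn (q i j)).
  by rewrite -mulrA signrMK (qV i j) invrN.
by rewrite signrMK mulr1.
Qed.

Lemma rfactor_exprz i j (b : nat) (ci : bool) :
  (- q j i) ^+ b * (if ci then - q i j else 1) = ((- q i j) ^ (b%:Z - ci%:Z))^-1.
Proof.
have qij0 : - q i j != 0 by rewrite oppr_eq0.
have -> : - q j i = (- q i j)^-1 by rewrite (qV i j) invrN.
case: ci; rewrite /= ?subr0 -?exprnP ?exprz_subn1 // exprVn ?mulr1 //.
by rewrite invfM invrK.
Qed.

Section Diagonal.
Variables (gamma : 'I_n -> int) (beta : 'I_n -> nat) (c : expo) (l : 'I_n).
Hypotheses (on_gamma : forall i, (beta i)%:Z - (c i : nat)%:Z = gamma i) (cl : c l).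

Let X i := (- q i l) ^ gamma i.

Lemma dcoef_on_gamma : dcoef beta c l = (-1) ^+ (\sum_(i : 'I_n | (i < l)%N) beta i) *
  (\prod_(i : 'I_n | (i < l)%N) X i
   - (-1) ^ gamma l * chi g l / \prod_(i : 'I_n | (l < i)%N) X i).
Proof.
have left : \prod_(i : 'I_n) lfactor beta c l i =
    (-1) ^+ (\sum_(i : 'I_n | (i < l)%N) beta i) * \prod_(i : 'I_n | (i < l)%N) X i.
  rewrite -prodrXr -big_split [RHS]big_mkcond /=; apply: eq_bigr => i _.
  by rewrite /lfactor /X; case: ifP => // _; rewrite lfactor_exprz on_gamma.
have right : \prod_(i : 'I_n) rfactor beta c l i = (\prod_(i : 'I_n | (l < i)%N) X i)^-1.
  rewrite -prodfV [RHS]big_mkcond; apply: eq_bigr => i _.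
  by rewrite /rfactor /X; case: ifP => // _; rewrite rfactor_exprz on_gamma.
have sum_le : (\sum_(i : 'I_n | (i <= l)%N) beta i =
    \sum_(i : 'I_n | (i < l)%N) beta i + beta l)%N.
  rewrite (bigD1 l) //= addnC; congr (_ + _)%N; apply: eq_bigl => i.
  by rewrite ltn_neqAle val_eqE andbC.
have gamma_l : gamma l = (beta l)%:Z - 1 by rewrite -on_gamma cl.
rewrite dcoefE left right sum_le exprD gamma_l exprz_subn1 ?oppr_eq0 ?oner_eq0 //.
rewrite invrN invr1 mulrN1; ring.
Qed.

Lemma dcoef_on_gamma_neq0 :
  (-1) ^ gamma l * \prod_(i : 'I_n | i != l) X i != chi g l -> dcoef beta c l != 0.
Proof.
apply: contraNneq; rewrite dcoef_on_gamma => /eqP.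
rewrite mulf_eq0 signr_eq0 subr_eq0 /= => /eqP P1E.
have P2_neq0 : \prod_(i : 'I_n | (l < i)%N) X i != 0.
  by apply/prodf_neq0 => i _; rewrite expfz_neq0 ?oppr_eq0.
have sign_sq : (-1) ^ gamma l * (-1) ^ gamma l = 1 :> k.
  by rewrite -expfzMl mulrNN mulr1 exp1rz.
have split_prod : \prod_(i : 'I_n | i != l) X i =
    \prod_(i : 'I_n | (i < l)%N) X i * \prod_(i : 'I_n | (l < i)%N) X i.
  rewrite (bigID (fun i : 'I_n => (i < l)%N)) /=; congr (_ * _); apply: eq_bigl => i.
    by rewrite andb_idl // => il; rewrite -val_eqE ltn_eqF.
  by rewrite -leqNgt ltn_neqAle eq_sym val_eqE.
by rewrite split_prod P1E divfK // mulrA sign_sq mul1r.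
Qed.

End Diagonal.

Section Contraction.
Variables (gamma : 'I_n -> int) (l : 'I_n).
Hypothesis gamma_l : gamma l != -1.
Hypothesis not_Cg_l :
  (-1) ^ gamma l * \prod_(i : 'I_n | i != l) (- q i l) ^ gamma i != chi g l.

Definition on_gamma beta c := forall i, (beta i)%:Z - (c i : nat)%:Z = gamma i.

Lemma on_gamma_incr beta c : c l = false ->
  on_gamma (incr beta l) (expoU1 c l) <-> on_gamma beta c.
Proof. by move=> cl; split=> bc i; move: (bc i); rewrite diff_incr. Qed.

Lemma on_gamma_subunit beta c j : (0 < beta j)%N -> c j ->
  on_gamma (subunit beta j) (expoD1 c j) <-> on_gamma beta c.
Proof. by move=> bj cj; split=> bc i; move: (bc i); rewrite diff_subunit. Qed.

Lemma inK_eq0 m f beta c : inK gamma m f -> degN beta = m -> ~ on_gamma beta c -> f beta c = 0.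
Proof. by move=> fK dm off; apply/eqP/negP => /negP /(fK _ dm). Qed.

(* Division by the diagonal entry of the differential, which is invertible on
   the [gamma]-diagonal precisely because [l] witnesses [gamma \notin C_g]. *)
Definition contraction f : cochain k n := fun beta =>
  [ffun a : expo => if a l then 0
             else f (incr beta l) (expoU1 a l) / dcoef (incr beta l) (expoU1 a l) l].

Lemma contraction_inK m f : inK gamma m.+1 f -> inK gamma m (contraction f).
Proof.
move=> fK beta dm a; rewrite ffunE; case: ifP => [_|al]; first by rewrite eqxx.
move=> h_neq0 i; rewrite -(diff_incr beta i al); apply: fK _ _ _ i.
  by rewrite degN_incr dm.
by apply: contraNneq h_neq0 => ->; rewrite mul0r.
Qed.

Lemma dcoch_contraction_off m f beta c : inK gamma m f -> degN beta = m ->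
  ~ on_gamma beta c -> dcoch q chi g (contraction f) beta c = 0.
Proof.
move=> fK dm off; rewrite dcochE; apply: big1 => j _.
case: ifP => // /andP [bj cj]; rewrite ffunE; case: ifP => [_|cjl]; first by rewrite mulr0.
rewrite (inK_eq0 fK) ?mul0r ?mulr0 //; first by rewrite degN_incr -degN_subunit.
by move/(on_gamma_incr _ cjl)/(on_gamma_subunit bj cj).
Qed.

Lemma dcoef_neq0 beta c : on_gamma beta c -> c l -> dcoef beta c l != 0.
Proof. by move=> bc cl; apply: dcoef_on_gamma_neq0. Qed.

Lemma dcoch_contraction_on f beta c : on_gamma beta c -> c l ->
  dcoch q chi g (contraction f) beta c = f beta c.
Proof.
move=> bc cl; have bl : (0 < beta l)%N.
  by rewrite lt0n; apply: contra gamma_l => /eqP bl0; rewrite -bc bl0 cl.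
rewrite dcochE (bigD1 l) //= bl cl big1 ?addr0 => [|j jl]; last first.
  by case: ifP => // _; rewrite ffunE expoD1_neq ?cl ?mulr0 // eq_sym.
rewrite ffunE expoD1_id subunitK // expoD1K // mulrC divfK //.
exact: dcoef_neq0.
Qed.

(* By [dcoef_subunit], the terms j != l are those of the cocycle equation at
   (beta + [l], c + [l]), rescaled by - 1 / dcoef (beta + [l]) (c + [l]) l. *)
Lemma dcoch_contraction_on_cocycle f beta c : on_gamma beta c -> c l = false ->
  dcoch q chi g f (incr beta l) (expoU1 c l) = 0 ->
  dcoch q chi g (contraction f) beta c = f beta c.
Proof.
move=> bc cl; have D_neq0 : dcoef (incr beta l) (expoU1 c l) l != 0.
  by apply: dcoef_neq0; [rewrite on_gamma_incr | exact: expoU1_id].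
have shift j : j != l -> (if (0 < beta j)%N && c j
    then dcoef beta c j * contraction f (subunit beta j) (expoD1 c j) else 0)
  = - (dcoef (incr beta l) (expoU1 c l) l)^-1 *
    (if (0 < incr beta l j)%N && expoU1 c l j
    then dcoef (incr beta l) (expoU1 c l) j *
         f (subunit (incr beta l) j) (expoD1 (expoU1 c l) j) else 0).
  move=> jl; rewrite incr_neq // expoU1_neq //.
  case: ifP => [/andP [bj cj]|_]; last by rewrite mulr0.
  have lj : l != j by rewrite eq_sym.
  have Dj : dcoef beta c j = osign l j * dcoef (incr beta l) (expoU1 c l) j.
    by rewrite -(dcoef_subunit lj) ?incr_id ?expoU1_id // incrK expoU1K.
  have Dl : dcoef (subunit (incr beta l) j) (expoD1 (expoU1 c l) j) l
      = osign j l * dcoef (incr beta l) (expoU1 c l) l.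
    by rewrite dcoef_subunit // ?incr_neq ?expoU1_neq.
  rewrite ffunE expoD1_neq // cl -subunit_incrC // -expoD1U1C // Dj Dl (osignC jl).
  have := osign_neq0 l j; move: (osign l j) => s s0.
  by field; rewrite D_neq0 oppr_eq0 s0.
rewrite dcochE (bigD1 l) //= incr_id expoU1_id incrK expoU1K // => /eqP cocycle.
rewrite dcochE (bigD1 l) //= cl andbF add0r (eq_bigr _ shift) -mulr_sumr.
by move: cocycle; rewrite addrC addr_eq0 => /eqP ->; field.
Qed.

Lemma dcoch_contraction m f : inK gamma m f ->
  (forall beta, degN beta = m.+1 -> dcoch q chi g f beta = 0) ->
  forall beta, degN beta = m -> dcoch q chi g (contraction f) beta = f beta.
Proof.
move=> fK f_cocycle beta dm; apply/ffunP => c.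
have [bc|off] := boolP [forall i, (beta i)%:Z - (c i : nat)%:Z == gamma i]; last first.
  rewrite (dcoch_contraction_off fK dm) ?(inK_eq0 fK dm) // => bc;
    by move/forallP: off; apply=> i; rewrite bc.
have {}bc : on_gamma beta c by move=> i; apply/eqP; move/forallP: bc.
case cl: (c l); first exact: dcoch_contraction_on.
apply: dcoch_contraction_on_cocycle => //.
by rewrite f_cocycle ?ffunE // degN_incr dm.
Qed.

Lemma contraction_cohom_vanishes m : cohom_vanishes q chi g gamma m.
Proof.
case: m => [|m] f fK f_cocycle.
  by move=> beta d0; rewrite -(dcoch_contraction fK f_cocycle d0) dcoch_deg0.
exists (contraction f); split; first exact: contraction_inK.
exact: dcoch_contraction.
Qed.

End Contraction.

End Differential.

Lemma not_in_Cg (k : fieldType) (n : nat) (q : 'I_n -> 'I_n -> k)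
    (gT : finGroupType) (chi : gT -> 'I_n -> k) (g : gT) (gamma : 'I_n -> int) :
  ~ in_Cg q chi g gamma -> exists l, gamma l != -1 /\
    (-1) ^ gamma l * \prod_(i : 'I_n | i != l) (- q i l) ^ gamma i != chi g l.
Proof.
move=> not_Cg.
have [/existsP [l /andP [gl cl]]|] := boolP [exists l, (gamma l != -1) &&
    ((-1) ^ gamma l * \prod_(i : 'I_n | i != l) (- q i l) ^ gamma i != chi g l)].
  by exists l.
rewrite negb_exists => /forallP no_l; case: not_Cg => l.
by move: (no_l l); rewrite negb_and !negbK => /orP [/eqP|/eqP]; [left|right].
Qed.

Theorem lemma3p1 (k : fieldType) (n : nat) (q : 'I_n -> 'I_n -> k)
    (gT : finGroupType) (chi : gT -> 'I_n -> k) (g : gT) (gamma : 'I_n -> int) :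
  [pchar k] =i pred0 ->
  (0 < n)%N ->
  (forall i j, q i j != 0) ->
  (forall i j, q j i = (q i j)^-1) ->
  (forall i, q i i = -1) ->
  (forall h i, chi h i != 0) ->
  (forall i, chi 1%g i = 1) ->
  (forall h1 h2 i, chi (h1 * h2)%g i = chi h1 i * chi h2 i) ->
  (forall l, -1 <= gamma l) ->
  ~ in_Cg q chi g gamma ->
  forall m : nat, cohom_vanishes q chi g gamma m.
Proof.
move=> _ _ q_neq0 qV _ _ _ _ _ /not_in_Cg [l [gamma_l not_Cg_l]] m.
exact: (contraction_cohom_vanishes q_neq0 qV gamma_l not_Cg_l).
Qed.
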